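(* Let $S$ be a semigroup and $m\ge1$ such that $S^m$ is a rectangular band. Then: (1) if $m=1$, $S$ is abelian; (2) $S$ is $(\lceil\log_2 m\rceil+1)$-solvable, and $\lceil\log_2 m\rceil$-solvable if $S^m$ is trivial (a single element); (3) $S$ is left $2m$-nilpotent, right $2m$-nilpotent and $2m$-supernilpotent, and in case $S^m$ is trivial it is left and right $m$-nilpotent and $m$-supernilpotent.
   Context: $S^m=\{a_1\cdots a_m: a_i\in S\}$. A rectangular band is a semigroup satisfying $x^2=x$ and $xyz=xz$. For an algebra $\mathbf A$ and congruences $\alpha_1,\dots,\alpha_n$, $M_{\mathbf A}(\alpha_1,\dots,\alpha_n)$ is the subalgebra of $\mathbf A^{\{0,1\}^n}$ generated by all $g$ such that for some $i$ and $(a,b)\in\alpha_i$, $g(x)=a$ if $x_i=0$ and $g(x)=b$ if $x_i=1$; $[\alpha_1,\dots,\alpha_n]$ is the smallest congruence $\delta$ such that for all $f\in M_{\mathbf A}(\alpha_1,\dots,\alpha_n)$: if $(f(x0),f(x1))\in\delta$ for all $x\in\{0,1\}^{n-1}\setminus\{(1,\dots,1)\}$ then $(f(1,\dots,1,0),f(1,\dots,1,1))\in\delta$. With $1$ total, $0$ trivial congruence: $[1]^0=1$, $[1]^{k+1}=[[1]^k,[1]^k]$; $(1]^1=1$, $(1]^{k+1}=[1,(1]^k]$; $[1)^1=1$, $[1)^{k+1}=[[1)^k,1]$. Abelian: $[1,1]=0$; $d$-solvable: $[1]^d=0$; left $d$-nilpotent: $(1]^{d+1}=0$; right $d$-nilpotent: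 $[1)^{d+1}=0$; $d$-supernilpotent: the $(d+1)$-ary $[1,\dots,1]=0$. *)

From mathcomp Require Import all_boot.
Set Implicit Arguments. Unset Strict Implicit. Unset Printing Implicit Defensive.

Section Commutators.
Variables (T : Type) (op : T -> T -> T).

Definition relT := T -> T -> Prop.

Definition is_cong (d : relT) : Prop :=
  [/\ forall a, d a a,
      forall a b, d a b -> d b a,
      forall a b c, d a b -> d b c -> d a c
    & forall a b c e, d a b -> d c e -> d (op a c) (op b e)].

Definition total_rel : relT := fun _ _ => True.
Definition is_zero (d : relT) : Prop := forall a b, d a b <-> a = b.

Definition cube (n : nat) := {ffun 'I_n -> bool}.

(* M_A(alpha_1,...,alpha_n): the subalgebra of T^{{0,1}^n} generated by the
   functions g with g(x) = a if x_i = 0 and g(x) = b if x_i = 1, (a,b) in alpha_i *)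
Inductive inM (n : nat) (al : 'I_n -> relT) : (cube n -> T) -> Prop :=
| M_gen (i : 'I_n) (a b : T) : al i a b -> inM al (fun x => if x i then b else a)
| M_op (f g : cube n -> T) : inM al f -> inM al g -> inM al (fun x => op (f x) (g x)).

(* x b : the point of {0,1}^(k+1) obtained by appending the bit b to x *)
Definition extc (k : nat) (x : cube k) (b : bool) : cube k.+1 :=
  [ffun i : 'I_k.+1 => if unlift ord_max i is Some j then x j else b].

Definition ones (k : nat) : cube k := [ffun _ => true].

Definition term_cond (k : nat) (al : 'I_k.+1 -> relT) (d : relT) : Prop :=
  forall f, inM al f ->
    (forall x : cube k, x != ones k -> d (f (extc x false)) (f (extc x true))) ->
    d (f (extc (ones k) false)) (f (extc (ones k) true)).

Definition comm (k : nat) (al : 'I_k.+1 -> relT) : relT :=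
  fun a b => forall d, is_cong d -> term_cond al d -> d a b.

Definition comm2 (al be : relT) : relT :=
  comm (k := 1) (fun i : 'I_2 => if val i == 0 then al else be).

Fixpoint dser (k : nat) : relT :=
  if k is k'.+1 then comm2 (dser k') (dser k') else total_rel.

(* lser k = (1]^(k+1) *)
Fixpoint lser (k : nat) : relT :=
  if k is k'.+1 then comm2 total_rel (lser k') else total_rel.

(* rser k = [1)^(k+1) *)
Fixpoint rser (k : nat) : relT :=
  if k is k'.+1 then comm2 (rser k') total_rel else total_rel.

Definition abelian_alg : Prop := is_zero (comm2 total_rel total_rel).
Definition solvable_alg (d : nat) : Prop := is_zero (dser d).
Definition left_nilpotent (d : nat) : Prop := is_zero (lser d).
Definition right_nilpotent (d : nat) : Prop := is_zero (rser d).
Definition supernilpotent (d : nat) : Prop :=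
  is_zero (comm (k := d) (fun _ => total_rel)).

(* spow k = S^(k+1) = { a_1 ... a_(k+1) } *)
Fixpoint spow (k : nat) : T -> Prop :=
  if k is k'.+1 then fun s => exists x y, spow k' x /\ s = op x y
  else fun _ => True.

Definition rect_band_set (P : T -> Prop) : Prop :=
  (forall x, P x -> op x x = x) /\
  (forall x y z, P x -> P y -> P z -> op (op x y) z = op x z).

Definition single_elt (P : T -> Prop) : Prop := exists e, forall s, P s <-> s = e.

End Commutators.

From mathcomp Require Import all_boot.
Set Implicit Arguments. Unset Strict Implicit. Unset Printing Implicit Defensive.

(* Write θ_I for the Rees congruence of an ideal I (a = b, or a, b ∈ I).  If
   I J ∪ J I ⊆ K for ideals I, J, K, every term of M(θ_I, θ_J) ignores one of
   the two coordinates or takes its values in K, so [θ_I, θ_J] ≤ θ_K.  For the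
   powers of S this reads [θ_{S^i}, θ_{S^j}] ≤ θ_{S^(i+j)}; hence [1]^k lies
   below θ_{S^(2^k)}, and (1]^k, [1)^k below θ_{S^k}.
   In the rectangular band B = S^m we have x s z = x z for x, z ∈ B and any s.
   Thus every nonconstant term of M(θ_B, θ_B) factors as P Q with P, Q valued in
   B and each depending on a single coordinate, and θ_B is abelian; when B is a
   single element, θ_B = 0.  This gives solvability and the bounds m.
   For the bounds 2m, let δ_k relate, besides equal pairs, those a, b ∈ B such
   that u a and u b lie in the same row (u a z = u b z for z ∈ B) and a u, b u
   in the same column, for every product u of at least k elements of S^1.  Then θ_B ≤ δ_m, δ_0 = 0, and
   [1, δ_k], [δ_k, 1] ≤ δ_(k-1).  Finally, by x s z = x z again, a product of at
   least m generators equals the product of its first m factors times that of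
   its last m, so a term of M(1, ..., 1) depends on at most 2m coordinates. *)

Definition agree_off n (s : 'I_n) (x y : cube n) := forall i, i != s -> x i = y i.

Definition zero1 : cube 1 := [ffun _ => false].

Lemma zero1_neq_ones : zero1 != ones 1.
Proof. by apply/negP => /eqP/(congr1 (fun x : cube 1 => x ord0)); rewrite !ffunE. Qed.

Lemma ord2P (i : 'I_2) : i = ord0 \/ i = ord_max.
Proof. by case: i => [[|[|k]] Hk]; [left | right |]; try apply: val_inj. Qed.

Lemma extc_max k (x : cube k) b : extc x b ord_max = b.
Proof. by rewrite ffunE unlift_none. Qed.

Lemma extc_ord0 (x : cube 1) b : extc x b ord0 = x ord0.
Proof.
rewrite ffunE; case: (unliftP ord_max ord0) => [j Ej | //].
by have -> : j = ord0 by apply: val_inj; case: j {Ej} => [[]].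
Qed.

Lemma agree_off_max k (x : cube k) b b' : agree_off ord_max (extc x b) (extc x b').
Proof. by move=> i; rewrite !ffunE; case: (unliftP ord_max i) => [//|->]; rewrite eqxx. Qed.

Lemma agree_off_ord0 (x y : cube 1) b : agree_off ord0 (extc x b) (extc y b).
Proof.
move=> i; rewrite !ffunE; case: (unliftP ord_max i) => [j -> | //].
by have -> : j = ord0 by apply: val_inj; case: j => [[]].
Qed.

Section Semigroup.
Variables (T : Type) (op : T -> T -> T).
Hypothesis opA : associative op.

Definition is_ideal (I : T -> Prop) := forall x y, I x \/ I y -> I (op x y).

Lemma spowS_le k x : spow op k.+1 x -> spow op k x.
Proof.
elim: k x => [//|k IH] _ [y [z [Hy ->]]]; exists y, z; split=> //; exact: IH.
Qed.

Lemma spow_le k k' x : k <= k' -> spow op k' x -> spow op k x.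
Proof.
move=> /subnK <-; elim: (k' - k) => [//|d IH] H; apply: IH; apply: spowS_le.
by rewrite -addSn.
Qed.

Lemma spow_mul i j x y : spow op i x -> spow op j y -> spow op (i + j).+1 (op x y).
Proof.
elim: j y => [|j IH] y Hx; first by rewrite addn0; exists x, y.
move=> [y' [z [Hy' ->]]]; rewrite addnS; exists (op x y'), z.
by split; [exact: IH | rewrite opA].
Qed.

Lemma spow_ideal k : is_ideal (spow op k).
Proof.
move=> x y [Hx|Hy]; first by apply: (@spow_le k k.+1) => //; exists x, y.
by apply: (@spow_le k (0 + k).+1); [rewrite add0n | apply: spow_mul].
Qed.

Lemma foldl_opA a b s : foldl op (op a b) s = op a (foldl op b s).
Proof. by elim: s a b => [//|c s IH] a b /=; rewrite -opA IH. Qed.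

Lemma spow_foldl a s : spow op (size s) (foldl op a s).
Proof.
elim/last_ind: s => [//|s b IH]; rewrite foldl_rcons size_rcons.
by exists (foldl op a s), b.
Qed.

Definition rel_sub (R1 R2 : relT T) := forall a b, R1 a b -> R2 a b.
Definition pair_rel (al be : relT T) (i : 'I_2) : relT T :=
  if val i == 0 then al else be.
Definition indep_of n (s : 'I_n) (f : cube n -> T) :=
  forall x y, agree_off s x y -> f x = f y.
Definition depends_on n (C : seq 'I_n) (f : cube n -> T) :=
  forall x y : cube n, {in C, forall i, x i = y i} -> f x = f y.

Lemma eq_cong : is_cong op eq.
Proof. by split=> // [a b c -> -> | a b c e -> ->]. Qed.

Lemma sub_eq_is_zero d : rel_sub d eq -> (forall a, d a a) -> is_zero d.
Proof. by move=> d_eq d_refl a b; split=> [/d_eq | ->]. Qed.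

Lemma comm_refl k (al : 'I_k.+1 -> relT T) a : comm op al a a.
Proof. by move=> d [refl _ _ _] _; apply: refl. Qed.

Lemma comm_least k (al : 'I_k.+1 -> relT T) d :
  is_cong op d -> term_cond op al d -> rel_sub (comm op al) d.
Proof. by move=> dC dTC a b; apply. Qed.

Lemma inM_mono n (al be : 'I_n -> relT T) f :
  (forall i, rel_sub (al i) (be i)) -> inM op al f -> inM op be f.
Proof. by move=> al_be; elim=> [i a b /al_be | f1 f2 _ H1 _ H2]; constructor. Qed.

Lemma comm2_mono al al' be be' :
  rel_sub al al' -> rel_sub be be' -> rel_sub (comm2 op al be) (comm2 op al' be').
Proof.
move=> alS beS a b H d dC dTC; apply: H dC _ => f fM; apply: dTC.
by apply: inM_mono fM => i; case: ifP.
Qed.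

Lemma dser_refl k a : dser op k a a.
Proof. by case: k => [|k] //; apply: comm_refl. Qed.

Lemma lser_refl k a : lser op k a a.
Proof. by case: k => [|k] //; apply: comm_refl. Qed.

Lemma rser_refl k a : rser op k a a.
Proof. by case: k => [|k] //; apply: comm_refl. Qed.

Lemma indep_of_op n (s : 'I_n) f g :
  indep_of s f -> indep_of s g -> indep_of s (fun x => op (f x) (g x)).
Proof. by move=> fs gs x y xy; rewrite (fs x y xy) (gs x y xy). Qed.

Lemma indep_of_gen n (t s : 'I_n) (a b : T) :
  t != s -> indep_of s (fun x => if x t then b else a).
Proof. by move=> ts x y xy; rewrite (xy t ts). Qed.

Lemma indep_of_const n (t s : 'I_n) (a : T) : indep_of s (fun x => if x t then a else a).
Proof. by move=> x y _; case: (x t); case: (y t). Qed.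

Lemma term_cond_of_indep k (al : 'I_k.+1 -> relT T) (d : relT T) :
  (forall a, d a a) -> (forall f, inM op al f -> exists j, indep_of j f) ->
  term_cond op al d.
Proof.
move=> d_refl indep f fM hyp; have [j fj] := indep f fM.
move: fj; case: (unliftP ord_max j) => [j' -> | ->] fj.
- (* [f] cannot tell [ones k] from the point that is [false] exactly at [j],
     where the hypothesis applies. *)
  pose x : cube k := [ffun i => i != j'].
  have x1 : x != ones k.
    by apply/negP => /eqP/(congr1 (fun y : cube k => y j')); rewrite !ffunE eqxx.
  have ones_x b : f (extc (ones k) b) = f (extc x b).
    apply: fj => i; rewrite !ffunE; case: (unliftP ord_max i) => [i' -> | //].
    by rewrite !ffunE (inj_eq (@lift_inj _ _)) => ->.
  by rewrite !ones_x; apply: hyp.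
- suff -> : f (extc (ones k) false) = f (extc (ones k) true) by apply: d_refl.
  apply: fj => i; rewrite !ffunE; case: (unliftP ord_max i) => [i' _ | ->] //.
  by rewrite eqxx.
Qed.

Lemma supernilpotent_of_support d :
  (forall f, inM op (fun _ : 'I_d.+1 => @total_rel T) f ->
     exists2 C : seq 'I_d.+1, size C <= d & depends_on C f) ->
  supernilpotent op d.
Proof.
move=> small; apply: sub_eq_is_zero; last exact: comm_refl.
apply: comm_least eq_cong _; apply: term_cond_of_indep => // f /small [C sizeC fC].
have [j jC] : exists j : 'I_d.+1, j \notin C.
  have : 0 < #|[predC C]|.
    rewrite -(ltn_add2l #|C|) addn0 cardC card_ord ltnS.
    exact: leq_trans (card_size C) sizeC.
  by case/card_gt0P => j; exists j.
exists j => x y xy; apply: fC => i iC; apply: xy.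
by apply: contraNneq jC => <-.
Qed.

Definition rees (I : T -> Prop) : relT T := fun a b => a = b \/ I a /\ I b.
Definition valued_in n (I : T -> Prop) (f : cube n -> T) := forall x, I (f x).

Lemma rees_cong I : is_ideal I -> is_cong op (rees I).
Proof.
move=> I_ideal; split=> [a | a b [-> | []] | a b c [-> | [Ia Ib]] [<- | [Ib' Ic]] |
  a b c e [-> | [Ia Ib]] [-> | [Ic Ie]]]; try by [left | right].
all: by right; split; apply: I_ideal; auto.
Qed.

Lemma rees_antitone I J : (forall x, J x -> I x) -> rel_sub (rees J) (rees I).
Proof. by move=> JI a b [-> | [Ja Jb]]; [left | right; split; apply: JI]. Qed.

Lemma rees_single_elt I : single_elt I -> rel_sub (rees I) eq.
Proof. by move=> [e I_e] a b [-> | [/I_e -> /I_e ->]]. Qed.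

Lemma indep_or_valued_op n (s : 'I_n) I f g : is_ideal I ->
    indep_of s f \/ valued_in I f -> indep_of s g \/ valued_in I g ->
  indep_of s (fun x => op (f x) (g x)) \/ valued_in I (fun x => op (f x) (g x)).
Proof.
move=> I_ideal [fs | fI]; last by right=> x; apply: I_ideal; left.
case=> [gs | gI]; last by right=> x; apply: I_ideal; right.
by left; apply: indep_of_op.
Qed.

Section ReesCommutator.
Variables I J K : T -> Prop.
Hypotheses (I_ideal : is_ideal I) (J_ideal : is_ideal J) (K_ideal : is_ideal K).
Hypothesis IJ_sub_K : forall x y, I x -> J y -> K (op x y) /\ K (op y x).

Lemma rees_pair_inv f : inM op (pair_rel (rees I) (rees J)) f ->
  [/\ indep_of ord0 f \/ valued_in I f, indep_of ord_max f \/ valued_in J f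
     & [\/ indep_of ord0 f, indep_of ord_max f | valued_in K f]].
Proof.
elim=> {f} [t a b | f g _ [fI fJ fK] _ [gI gJ gK]].
  case: (ord2P t) => -> /= [<- | [Ia Ib]].
  - by split; [left | left | apply: Or31]; apply: indep_of_const.
  - split; [by right=> x; case: (x ord0) | left | apply: Or32]; exact: indep_of_gen.
  - by split; [left | left | apply: Or31]; apply: indep_of_const.
  - split; [left | by right=> x; case: (x ord_max) | apply: Or31]; exact: indep_of_gen.
split; try exact: indep_or_valued_op.
case: fK => [f0 | f1 | fK]; last by apply: Or33 => x; apply: K_ideal; left.
  case: gK => [g0 | g1 | gK]; last by apply: Or33 => x; apply: K_ideal; right.
  - by apply: Or31; apply: indep_of_op.
  - case: gI => [g0 | gI]; first by apply: Or31; apply: indep_of_op.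
    case: fJ => [f1' | fJ]; first by apply: Or32; apply: indep_of_op.
    by apply: Or33 => x; case: (IJ_sub_K (gI x) (fJ x)).
case: gK => [g0 | g1 | gK]; last by apply: Or33 => x; apply: K_ideal; right.
- case: fI => [f0 | fI]; first by apply: Or31; apply: indep_of_op.
  case: gJ => [g1' | gJ]; first by apply: Or32; apply: indep_of_op.
  by apply: Or33 => x; case: (IJ_sub_K (fI x) (gJ x)).
- by apply: Or32; apply: indep_of_op.
Qed.

Lemma rees_term_cond : term_cond op (pair_rel (rees I) (rees J)) (rees K).
Proof.
move=> f /rees_pair_inv [_ _ [f0 | f1 | fK]] hyp; last by right.
- have f_ones b : f (extc (ones 1) b) = f (extc zero1 b).
    by apply: f0; apply: agree_off_ord0.
  by rewrite !f_ones; apply: hyp; apply: zero1_neq_ones.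
- by left; apply: f1; apply: agree_off_max.
Qed.

End ReesCommutator.

Lemma spow_rees_term_cond i j :
  term_cond op (pair_rel (rees (spow op i)) (rees (spow op j))) (rees (spow op (i + j).+1)).
Proof.
apply: rees_term_cond; try exact: spow_ideal.
by move=> x y xi yj; split; [| rewrite addnC]; apply: spow_mul.
Qed.

Lemma comm2_sub_rees i j al be :
    rel_sub al (rees (spow op i)) -> rel_sub be (rees (spow op j)) ->
  rel_sub (comm2 op al be) (rees (spow op (i + j).+1)).
Proof.
move=> al_i be_j a b /(comm2_mono al_i be_j).
by apply: comm_least; [apply: rees_cong; apply: spow_ideal | apply: spow_rees_term_cond].
Qed.

Lemma total_sub_rees0 : rel_sub (@total_rel T) (rees (spow op 0)).
Proof. by move=> a b _; right. Qed.

Lemma dser_sub_rees k : rel_sub (dser op k) (rees (spow op (2 ^ k).-1)).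
Proof.
elim: k => [|k IH] /=; first exact: total_sub_rees0.
have -> : (2 ^ k.+1).-1 = ((2 ^ k).-1 + (2 ^ k).-1).+1.
  by rewrite expnS mul2n -addnn; case: (2 ^ k) (expn_gt0 2 k) => [//|t] _; rewrite addnS.
exact: comm2_sub_rees.
Qed.

Lemma lser_sub_rees k : rel_sub (lser op k) (rees (spow op k)).
Proof.
elim: k => [|k IH] /=; first exact: total_sub_rees0.
exact: comm2_sub_rees total_sub_rees0 IH.
Qed.

Lemma rser_sub_rees k : rel_sub (rser op k) (rees (spow op k)).
Proof.
elim: k => [|k IH] /=; first exact: total_sub_rees0.
by have := comm2_sub_rees IH total_sub_rees0; rewrite addn0.
Qed.

(* [option T] is the monoid S^1, [None] being the adjoined unit; [len_ge k u]
   says that [u] is a product of at least [k] factors. *)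
Definition actl (u : option T) a := if u is Some w then op w a else a.
Definition actr a (v : option T) := if v is Some w then op a w else a.
Definition len_ge k (u : option T) := if u is Some w then spow op k.-1 w else k = 0.

Lemma actl_opr u a b : actl u (op a b) = op (actl u a) b.
Proof. by case: u => //= w; rewrite opA. Qed.

Lemma actl_opl u w a : actl u (op w a) = actl (Some (actl u w)) a.
Proof. by case: u => //= u'; rewrite opA. Qed.

Lemma actr_opl a b v : actr (op a b) v = op a (actr b v).
Proof. by case: v => //= w; rewrite opA. Qed.

Lemma actr_opr a w v : actr (op a w) v = actr a (Some (actr w v)).
Proof. by case: v => //= v'; rewrite opA. Qed.

Lemma len_ge_le k k' u : k' <= k -> len_ge k u -> len_ge k' u.
Proof.
case: u => [w|] /= le_k'k; first by apply: spow_le; rewrite -!subn1 leq_sub2r.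
by move=> k0; move: le_k'k; rewrite k0 leqn0 => /eqP.
Qed.

Lemma len_ge_actl k u a : len_ge k u -> len_ge k.+1 (Some (actl u a)).
Proof. by case: u => [w|] /=; [case: k => //= k; exists w, a | move=> ->]. Qed.

Lemma len_ge_actr k v a : len_ge k v -> len_ge k.+1 (Some (actr a v)).
Proof.
case: v => [w|] /= ; last by move=> ->.
by case: k => [|k] //= w_k; rewrite -[k]add0n; apply: spow_mul.
Qed.

Definition prod1 (s : seq T) : option T :=
  if s is a :: s' then Some (foldl op a s') else None.

Lemma foldl_cat_actr a p r : foldl op a (p ++ r) = actr (foldl op a p) (prod1 r).
Proof. by case: r => [|c r]; rewrite ?cats0 // foldl_cat /= foldl_opA. Qed.

Lemma prod1_cat_actl r b q : prod1 (r ++ b :: q) = Some (actl (prod1 r) (foldl op b q)).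
Proof. by case: r => [|c r] //=; rewrite foldl_cat /= foldl_opA. Qed.

Section RectangularBandIdeal.
Variable I : T -> Prop.
Hypotheses (I_ideal : is_ideal I) (I_band : rect_band_set op I).

Lemma ideal_actl u a : I a -> I (actl u a).
Proof. by case: u => //= w Ia; apply: I_ideal; right. Qed.

Lemma ideal_actr a v : I a -> I (actr a v).
Proof. by case: v => //= w Ia; apply: I_ideal; left. Qed.

Lemma band_idem x : I x -> op x x = x.
Proof. exact: I_band.1. Qed.

Lemma band_absorbl x s z : I x -> I z -> op (op x s) z = op x z.
Proof.
move=> Ix Iz; rewrite -{1}(band_idem Ix) -(opA x x s).
by apply: I_band.2 => //; apply: I_ideal; left.
Qed.

Lemma band_absorbr x s z : I x -> I z -> op x (op s z) = op x z.
Proof. by move=> Ix Iz; rewrite opA band_absorbl. Qed.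

Lemma band_absorb_act x u v z : I x -> I z -> op (actr x v) (actl u z) = op x z.
Proof.
move=> Ix Iz; have Iuz := ideal_actl u Iz.
transitivity (op x (actl u z)); first by case: v => //= w; rewrite band_absorbl.
by case: u {Iuz} => //= w; rewrite band_absorbr.
Qed.

Lemma rees_band_inv f : inM op (pair_rel (rees I) (rees I)) f ->
  (forall x y, f x = f y) \/
  exists P Q, [/\ valued_in I P, valued_in I Q, exists s, indep_of s P,
                  exists t, indep_of t Q & forall x, f x = op (P x) (Q x)].
Proof.
elim=> {f} [t a b | f g _ f_inv _ g_inv].
  have [s st] : exists s : 'I_2, t != s by case: (ord2P t) => ->; [exists ord_max | exists ord0].
  rewrite /pair_rel if_same => -[<- | [Ia Ib]]; first by left=> x y; case: (x t); case: (y t).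
  right; exists (fun x => if x t then b else a), (fun x => if x t then b else a).
  by split; try (exists s; exact: indep_of_gen); move=> x; case: (x t); rewrite ?band_idem.
case: f_inv => [f_const | [P [Q [IP IQ [s Ps] [t Qt] fPQ]]]];
  case: g_inv => [g_const | [P' [Q' [IP' IQ' [s' P's'] [t' Q't'] gPQ]]]].
- by left=> x y; rewrite (f_const x y) (g_const x y).
- right; exists (fun x => op (f x) (P' x)), Q'; split=> //.
  + by move=> x; apply: I_ideal; right.
  + by exists s'; apply: indep_of_op => // x y _; apply: f_const.
  + by exists t'.
  + by move=> x; rewrite gPQ opA.
- right; exists P, (fun x => op (Q x) (g x)); split=> //.
  + by move=> x; apply: I_ideal; left.
  + by exists s.
  + by exists t; apply: indep_of_op => // x y _; apply: g_const.
  + by move=> x; rewrite fPQ opA.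
- right; exists P, Q'; split=> //; [by exists s | by exists t' |].
  by move=> x; rewrite fPQ gPQ -opA (opA (Q x)) band_absorbr.
Qed.

Lemma rees_band_term_cond : term_cond op (pair_rel (rees I) (rees I)) eq.
Proof.
move=> f /rees_band_inv [f_const | [P [Q [IP IQ [s Ps] [t Qt] fPQ]]]] hyp.
  exact: f_const.
have := hyp zero1 zero1_neq_ones; rewrite !fPQ.
have shift0 (R : cube 2 -> T) b : indep_of ord0 R -> R (extc (ones 1) b) = R (extc zero1 b).
  by move=> R0; apply: R0; apply: agree_off_ord0.
have flat (R : cube 2 -> T) x : indep_of ord_max R -> R (extc x false) = R (extc x true).
  by move=> Rmax; apply: Rmax; apply: agree_off_max.
case: (ord2P s) Ps => -> Ps; case: (ord2P t) Qt => -> Qt.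
- by rewrite !(shift0 P) // !(shift0 Q).
- rewrite !(shift0 P) // !(flat Q) // => e.
  have sandwich b : op (P (extc zero1 b)) (Q (extc (ones 1) true)) =
      op (op (P (extc zero1 b)) (Q (extc zero1 true))) (Q (extc (ones 1) true)).
    by rewrite band_absorbl ?IP ?IQ.
  by rewrite !sandwich e.
- rewrite !(flat P) // !(shift0 Q) // => e.
  have sandwich b : op (P (extc (ones 1) true)) (Q (extc zero1 b)) =
      op (P (extc (ones 1) true)) (op (P (extc zero1 true)) (Q (extc zero1 b))).
    by rewrite band_absorbr ?IP ?IQ.
  by rewrite !sandwich e.
- by rewrite !(flat P) // !(flat Q).
Qed.

Definition same_row a b := forall z, I z -> op a z = op b z.
Definition same_col a b := forall z, I z -> op z a = op z b.

Lemma same_row_refl a : same_row a a. Proof. by []. Qed.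
Lemma same_row_sym a b : same_row a b -> same_row b a.
Proof. by move=> ab z Iz; rewrite ab. Qed.
Lemma same_row_trans a b c : same_row a b -> same_row b c -> same_row a c.
Proof. by move=> ab bc z Iz; rewrite ab // bc. Qed.

Lemma same_col_refl a : same_col a a. Proof. by []. Qed.
Lemma same_col_sym a b : same_col a b -> same_col b a.
Proof. by move=> ab z Iz; rewrite ab. Qed.
Lemma same_col_trans a b c : same_col a b -> same_col b c -> same_col a c.
Proof. by move=> ab bc z Iz; rewrite ab // bc. Qed.

Lemma same_row_opr u a w : I a -> same_row (actl u (op a w)) (actl u a).
Proof. by move=> Ia z Iz; rewrite actl_opr band_absorbl //; apply: ideal_actl. Qed.

Lemma same_col_opl v w a : I a -> same_col (actr (op w a) v) (actr a v).
Proof. by move=> Ia z Iz; rewrite actr_opl band_absorbr //; apply: ideal_actr. Qed.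

Definition delta k a b := a = b \/
  [/\ I a, I b, forall u, len_ge k u -> same_row (actl u a) (actl u b)
    & forall v, len_ge k v -> same_col (actr a v) (actr b v)].

Lemma delta_opr k a b s : delta k a b -> delta k (op a s) (op b s).
Proof.
case=> [-> | [Ia Ib rows cols]]; first by left.
right; split; try by apply: I_ideal; left.
- move=> u ku; apply: same_row_trans (same_row_opr _ _ Ia) _.
  exact: same_row_trans (rows u ku) (same_row_sym (same_row_opr _ _ Ib)).
- move=> v kv; rewrite !actr_opr; apply: cols.
  exact: len_ge_le (leqnSn _) (len_ge_actr _ kv).
Qed.

Lemma delta_opl k a b s : delta k a b -> delta k (op s a) (op s b).
Proof.
case=> [-> | [Ia Ib rows cols]]; first by left.
right; split; try by apply: I_ideal; right.
- move=> u ku; rewrite !actl_opl; apply: rows.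
  exact: len_ge_le (leqnSn _) (len_ge_actl _ ku).
- move=> v kv; apply: same_col_trans (same_col_opl _ _ Ia) _.
  exact: same_col_trans (cols v kv) (same_col_sym (same_col_opl _ _ Ib)).
Qed.

Lemma delta_trans k a b c : delta k a b -> delta k b c -> delta k a c.
Proof.
case=> [-> // | [Ia Ib rows cols]] [<- | [_ Ic rows' cols']]; first by right.
right; split=> // [u ku | v kv].
  exact: same_row_trans (rows u ku) (rows' u ku).
exact: same_col_trans (cols v kv) (cols' v kv).
Qed.

Lemma delta_cong k : is_cong op (delta k).
Proof.
split=> [a | a b | | a b c e ab ce]; first by left.
- case=> [-> | [Ia Ib rows cols]]; [by left | right; split=> // [u ku | v kv]].
    exact: same_row_sym (rows u ku).
  exact: same_col_sym (cols v kv).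
- exact: delta_trans.
- exact: delta_trans (delta_opr _ ab) (delta_opl _ ce).
Qed.

Lemma delta0_eq : rel_sub (delta 0) eq.
Proof.
move=> a b [// | [Ia Ib rows cols]].
have aab : op a a = op b a := rows None erefl a Ia.
have bab : op b a = op b b := cols None erefl b Ib.
by rewrite -(band_idem Ia) aab bab band_idem.
Qed.

Lemma rees_sub_delta k :
  (forall x, spow op k x -> I x) -> rel_sub (rees (spow op k)) (delta k.+1).
Proof.
move=> powI a b [-> | [/powI Ia /powI Ib]]; first by left.
right; split=> // [[u /powI Iu | //] | [v /powI Iv | //]] z Iz /=.
  by rewrite !band_absorbl.
by rewrite !band_absorbr.
Qed.

Lemma delta_row k c0 c1 u b b' : delta k c0 c1 -> len_ge k u ->
  same_row (actl u (if b then c1 else c0)) (actl u (if b' then c1 else c0)).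
Proof.
case=> [-> | [_ _ rows _]] ku; first by rewrite !if_same; apply: same_row_refl.
case: b; case: b'; try exact: same_row_refl.
  exact: same_row_sym (rows u ku).
exact: rows u ku.
Qed.

Lemma delta_col k c0 c1 v b b' : delta k c0 c1 -> len_ge k v ->
  same_col (actr (if b then c1 else c0) v) (actr (if b' then c1 else c0) v).
Proof.
case=> [-> | [_ _ _ cols]] kv; first by rewrite !if_same; apply: same_col_refl.
case: b; case: b'; try exact: same_col_refl.
  exact: same_col_sym (cols v kv).
exact: cols v kv.
Qed.

Section DeltaInvariant.
Variables (n : nat) (s : 'I_n) (k : nat) (al : 'I_n -> relT T).
Hypothesis al_s : rel_sub (al s) (delta k).

(* Either the first factor of [f] that depends on coordinate [s] is its
   leftmost factor, or some factor precedes it and, by the definition of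
   [delta k], the row of [u * f x] no longer depends on [x s] once [u] has
   at least [k.-1] factors. *)
Definition row_inv (f : cube n -> T) :=
  (exists c0 c1, delta k c0 c1 /\
     forall u x, same_row (actl u (f x)) (actl u (if x s then c1 else c0))) \/
  forall u x y, len_ge k.-1 u -> agree_off s x y ->
    same_row (actl u (f x)) (actl u (f y)).

Definition col_inv (f : cube n -> T) :=
  (exists c0 c1, delta k c0 c1 /\
     forall v x, same_col (actr (f x) v) (actr (if x s then c1 else c0) v)) \/
  forall v x y, len_ge k.-1 v -> agree_off s x y ->
    same_col (actr (f x) v) (actr (f y) v).

Lemma row_inv_opr f g : valued_in I f -> row_inv f -> row_inv (fun x => op (f x) (g x)).
Proof.
move=> fI [[c0 [c1 [c01 fE]]] | fE].
  left; exists c0, c1; split=> // u x.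
  exact: same_row_trans (same_row_opr _ _ (fI x)) (fE u x).
right=> u x y ku xy; apply: same_row_trans (same_row_opr _ _ (fI x)) _.
exact: same_row_trans (fE u x y ku xy) (same_row_sym (same_row_opr _ _ (fI y))).
Qed.

Lemma col_inv_opl f g : valued_in I g -> col_inv g -> col_inv (fun x => op (f x) (g x)).
Proof.
move=> gI [[c0 [c1 [c01 gE]]] | gE].
  left; exists c0, c1; split=> // v x.
  exact: same_col_trans (same_col_opl _ _ (gI x)) (gE v x).
right=> v x y kv xy; apply: same_col_trans (same_col_opl _ _ (gI x)) _.
exact: same_col_trans (gE v x y kv xy) (same_col_sym (same_col_opl _ _ (gI y))).
Qed.

Lemma row_inv_opl f g : indep_of s f -> row_inv g -> row_inv (fun x => op (f x) (g x)).
Proof.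
move=> fs g_inv; right=> u x y ku xy; rewrite (fs x y xy) !actl_opl.
have ku' : len_ge k (Some (actl u (f y))) := len_ge_le (leqSpred k) (len_ge_actl _ ku).
case: g_inv => [[c0 [c1 [c01 gE]]] | gE].
  apply: same_row_trans (gE _ x) _; apply: same_row_trans (same_row_sym (gE _ y)).
  exact: delta_row c01 ku'.
exact: gE _ _ _ (len_ge_le (leq_pred k) ku') xy.
Qed.

Lemma col_inv_opr f g : indep_of s g -> col_inv f -> col_inv (fun x => op (f x) (g x)).
Proof.
move=> gs f_inv; right=> v x y kv xy; rewrite (gs x y xy) !actr_opr.
have kv' : len_ge k (Some (actr (g y) v)) := len_ge_le (leqSpred k) (len_ge_actr _ kv).
case: f_inv => [[c0 [c1 [c01 fE]]] | fE].
  apply: same_col_trans (fE _ x) _; apply: same_col_trans (same_col_sym (fE _ y)).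
  exact: delta_col c01 kv'.
exact: fE _ _ _ (len_ge_le (leq_pred k) kv') xy.
Qed.

Lemma delta_invariant f : inM op al f ->
  indep_of s f \/ [/\ valued_in I f, row_inv f & col_inv f].
Proof.
elim=> {f} [t a b | f g _ f_inv _ g_inv].
  case: (eqVneq t s) => [-> ab | ts _]; last by left; apply: indep_of_gen.
  case: (al_s ab) => [<- | [Ia Ib _ _]]; first by left; apply: indep_of_const.
  right; split; first by move=> x; case: (x s).
    by left; exists a, b; split=> [|u x]; [exact: al_s | apply: same_row_refl].
  by left; exists a, b; split=> [|v x]; [exact: al_s | apply: same_col_refl].
case: f_inv => [fs | [fI frow fcol]]; case: g_inv => [gs | [gI grow gcol]].
- by left; apply: indep_of_op.
- right; split; [by move=> x; apply: I_ideal; right | exact: row_inv_opl | exact: col_inv_opl].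
- right; split; [by move=> x; apply: I_ideal; left | exact: row_inv_opr | exact: col_inv_opr].
- right; split; [by move=> x; apply: I_ideal; left | exact: row_inv_opr | exact: col_inv_opl].
Qed.

End DeltaInvariant.

Lemma delta_rows_cols k a b : delta k a b ->
  (forall u, len_ge k u -> same_row (actl u a) (actl u b)) /\
  (forall v, len_ge k v -> same_col (actr a v) (actr b v)).
Proof.
case=> [-> | [_ _ rows cols]]; last by [].
by split=> ? _; [apply: same_row_refl | apply: same_col_refl].
Qed.

Lemma delta_term_cond_l k : term_cond op (pair_rel (@total_rel T) (delta k)) (delta k.-1).
Proof.
move=> f fM hyp.
have al_max : rel_sub (pair_rel (@total_rel T) (delta k) ord_max) (delta k) by [].
have [f_max | [fI frow fcol]] := delta_invariant al_max fM.
  by left; apply: f_max; apply: agree_off_max.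
have [rows cols] := delta_rows_cols (hyp zero1 zero1_neq_ones).
right; split=> // [u ku | v kv].
  case: frow => [[c0 [c1 [_ fE]]] | fE]; last exact: fE _ _ _ ku (agree_off_max _ _ _).
  have fE' x b : same_row (actl u (f (extc x b))) (actl u (if b then c1 else c0)).
    by have := fE u (extc x b); rewrite extc_max.
  apply: same_row_trans (fE' _ false) _; apply: same_row_trans (same_row_sym (fE' zero1 false)) _.
  apply: same_row_trans (rows u ku) _.
  exact: same_row_trans (fE' zero1 true) (same_row_sym (fE' _ true)).
case: fcol => [[c0 [c1 [_ fE]]] | fE]; last exact: fE _ _ _ kv (agree_off_max _ _ _).
have fE' x b : same_col (actr (f (extc x b)) v) (actr (if b then c1 else c0) v).
  by have := fE v (extc x b); rewrite extc_max.
apply: same_col_trans (fE' _ false) _; apply: same_col_trans (same_col_sym (fE' zero1 false)) _.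
apply: same_col_trans (cols v kv) _.
exact: same_col_trans (fE' zero1 true) (same_col_sym (fE' _ true)).
Qed.

Lemma delta_term_cond_r k : term_cond op (pair_rel (delta k) (@total_rel T)) (delta k.-1).
Proof.
move=> f fM hyp.
have al_0 : rel_sub (pair_rel (delta k) (@total_rel T) ord0) (delta k) by [].
have [f_0 | [fI frow fcol]] := delta_invariant al_0 fM.
  have f_ones b : f (extc (ones 1) b) = f (extc zero1 b) by apply: f_0; apply: agree_off_ord0.
  by rewrite !f_ones; apply: hyp; apply: zero1_neq_ones.
have [rows cols] := delta_rows_cols (hyp zero1 zero1_neq_ones).
have ones0 b : extc (ones 1) b ord0 = true by rewrite extc_ord0 ffunE.
right; split=> // [u ku | v kv].
  case: frow => [[c0 [c1 [_ fE]]] | fE].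
    have := fE u (extc (ones 1) true); have := fE u (extc (ones 1) false).
    rewrite !ones0 => e0 e1; exact: same_row_trans e0 (same_row_sym e1).
  apply: same_row_trans (fE u _ _ ku (agree_off_ord0 _ _ _)) _.
  exact: same_row_trans (rows u ku) (fE u _ _ ku (agree_off_ord0 _ _ _)).
case: fcol => [[c0 [c1 [_ fE]]] | fE].
  have := fE v (extc (ones 1) true); have := fE v (extc (ones 1) false).
  rewrite !ones0 => e0 e1; exact: same_col_trans e0 (same_col_sym e1).
apply: same_col_trans (fE v _ _ kv (agree_off_ord0 _ _ _)) _.
exact: same_col_trans (cols v kv) (fE v _ _ kv (agree_off_ord0 _ _ _)).
Qed.

End RectangularBandIdeal.

Lemma rees_spow_le k k' : k <= k' -> rel_sub (rees (spow op k')) (rees (spow op k)).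
Proof. by move=> le_kk'; apply: rees_antitone => x; apply: spow_le. Qed.

Section PowerRectangularBand.
Variable m : nat.
Hypotheses (m_gt0 : 0 < m) (band : rect_band_set op (spow op m.-1)).
Local Notation B := (spow op m.-1).
Let B_ideal : is_ideal B := @spow_ideal m.-1.

Lemma dser_sub_band : rel_sub (dser op (up_log 2 m)) (rees B).
Proof.
move=> a b /dser_sub_rees; apply: rees_spow_le.
by rewrite -!subn1 leq_sub2r // up_logP.
Qed.

Lemma solvable_up_log : solvable_alg op (up_log 2 m).+1.
Proof.
apply: sub_eq_is_zero; last exact: dser_refl.
move=> a b /(comm2_mono dser_sub_band dser_sub_band).
by apply: comm_least; [exact: eq_cong | exact: rees_band_term_cond].
Qed.

Lemma solvable_up_log_single : single_elt B -> solvable_alg op (up_log 2 m).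
Proof.
move=> B1; apply: sub_eq_is_zero; last exact: dser_refl.
by move=> a b /dser_sub_band /(rees_single_elt B1).
Qed.

(* [m - t] truncates at [0], where [delta 0] is equality. *)
Lemma lser_sub_delta t : rel_sub (lser op (m.-1 + t)) (delta B (m - t)).
Proof.
elim: t => [|t IH].
  rewrite addn0 subn0 -[X in delta _ X](prednK m_gt0) => a b /lser_sub_rees.
  exact: rees_sub_delta.
rewrite addnS subnS => a b /(comm2_mono (fun _ _ ab => ab) IH).
by apply: comm_least; [exact: delta_cong | exact: delta_term_cond_l].
Qed.

Lemma rser_sub_delta t : rel_sub (rser op (m.-1 + t)) (delta B (m - t)).
Proof.
elim: t => [|t IH].
  rewrite addn0 subn0 -[X in delta _ X](prednK m_gt0) => a b /rser_sub_rees.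
  exact: rees_sub_delta.
rewrite addnS subnS => a b /(comm2_mono IH (fun _ _ ab => ab)).
by apply: comm_least; [exact: delta_cong | exact: delta_term_cond_r].
Qed.

Lemma left_nilpotent_2m : left_nilpotent op (2 * m).
Proof.
apply: sub_eq_is_zero; last exact: lser_refl.
have -> : 2 * m = m.-1 + m.+1 by rewrite addnS -addSn prednK // mul2n addnn.
move=> a b /lser_sub_delta; rewrite subnS subnn.
exact: delta0_eq.
Qed.

Lemma right_nilpotent_2m : right_nilpotent op (2 * m).
Proof.
apply: sub_eq_is_zero; last exact: rser_refl.
have -> : 2 * m = m.-1 + m.+1 by rewrite addnS -addSn prednK // mul2n addnn.
move=> a b /rser_sub_delta; rewrite subnS subnn.
exact: delta0_eq.
Qed.

Lemma left_nilpotent_single : single_elt B -> left_nilpotent op m.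
Proof.
move=> B1; apply: sub_eq_is_zero; last exact: lser_refl.
by move=> a b /lser_sub_rees /(rees_spow_le (leq_pred m)) /(rees_single_elt B1).
Qed.

Lemma right_nilpotent_single : single_elt B -> right_nilpotent op m.
Proof.
move=> B1; apply: sub_eq_is_zero; last exact: rser_refl.
by move=> a b /rser_sub_rees /(rees_spow_le (leq_pred m)) /(rees_single_elt B1).
Qed.

Lemma foldl_band_split a s p r b q r' : s = p ++ r -> a :: s = r' ++ b :: q ->
  size p = m.-1 -> size q = m.-1 -> foldl op a s = op (foldl op a p) (foldl op b q).
Proof.
move=> s_pr s_rq size_p size_q; set W := foldl op a s.
have BW : B W.
  by apply: (@spow_le _ (size s)); [rewrite s_pr size_cat size_p leq_addr | apply: spow_foldl].
have W_p : W = actr (foldl op a p) (prod1 r) by rewrite /W s_pr foldl_cat_actr.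
have W_q : W = actl (prod1 r') (foldl op b q).
  by have := prod1_cat_actl r' b q; rewrite -s_rq => -[].
rewrite -(band_idem band BW) {1}W_p W_q (band_absorb_act B_ideal band) //.
  by rewrite -size_p; apply: spow_foldl.
by rewrite -size_q; apply: spow_foldl.
Qed.

Section Words.
Variable n : nat.

Definition gen_val (g : 'I_n * T * T) (x : cube n) := if x g.1.1 then g.2 else g.1.2.
Definition word_val g (w : seq ('I_n * T * T)) x :=
  foldl op (gen_val g x) [seq gen_val h x | h <- w].
Definition coords (w : seq ('I_n * T * T)) := [seq h.1.1 | h <- w].

Lemma inM_word (al : 'I_n -> relT T) f : inM op al f ->
  exists g w, forall x, f x = word_val g w x.
Proof.
elim=> {f} [i a b _ | f f' _ [g [w fw]] _ [g' [w' fw']]]; first by exists (i, a, b), [::].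
exists g, (w ++ g' :: w') => x.
by rewrite fw fw' /word_val map_cat foldl_cat /= foldl_opA.
Qed.

Lemma gen_vals_support w (x y : cube n) : {in coords w, forall i, x i = y i} ->
  [seq gen_val h x | h <- w] = [seq gen_val h y | h <- w].
Proof.
elim: w => //= h w IH xy; congr (_ :: _).
  by rewrite /gen_val xy ?mem_head.
by apply: IH => i iw; apply: xy; rewrite inE iw orbT.
Qed.

Lemma word_val_support g w : depends_on (coords (g :: w)) (word_val g w).
Proof. by move=> x y /gen_vals_support; rewrite /word_val => -[-> ->]. Qed.

Lemma word_support g w :
  exists2 C : seq 'I_n, size C <= 2 * m & depends_on C (word_val g w).
Proof.
case: (ltnP (size w).+1 m) => [short | long].
  exists (coords (g :: w)); last exact: word_val_support.
  by rewrite size_map (leq_trans (ltnW short)) // leq_pmull.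
pose k := size (g :: w) - m.
have size_drop_k : size (drop k (g :: w)) = m by rewrite size_drop subKn.
case E: (drop k (g :: w)) size_drop_k => [|h q] size_hq; first by move: m_gt0; rewrite -size_hq.
have size_p : size (take m.-1 w) = m.-1 by rewrite size_takel // -ltnS prednK.
have size_q : size q = m.-1 by rewrite -size_hq.
have split_w x : word_val g w x = op (word_val g (take m.-1 w) x) (word_val h q x).
  apply: (foldl_band_split (r := [seq gen_val e x | e <- drop m.-1 w])
                           (r' := [seq gen_val e x | e <- take k (g :: w)])); rewrite ?size_map //.
    by rewrite -map_cat cat_take_drop.
  by have := congr1 (map (gen_val^~ x)) (cat_take_drop k (g :: w)); rewrite E map_cat /= => <-.
exists (coords (g :: take m.-1 w) ++ coords (h :: q)).
  by rewrite size_cat !size_map /= size_p size_q prednK // mul2n addnn.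
move=> x y xy; rewrite !split_w; congr op; apply: word_val_support => i Ci;
  by apply: xy; rewrite mem_cat Ci ?orbT.
Qed.

Lemma word_support_single g w : single_elt B ->
  exists2 C : seq 'I_n, size C <= m & depends_on C (word_val g w).
Proof.
move=> [e B_e]; case: (ltnP (size w).+1 m) => [short | long].
  by exists (coords (g :: w)); [rewrite size_map ltnW | exact: word_val_support].
exists [::] => // x y _.
have Bw z : B (word_val g w z).
  apply: (@spow_le _ (size w)); first by rewrite -ltnS prednK.
  by have := spow_foldl (gen_val g z) [seq gen_val h z | h <- w]; rewrite size_map.
by rewrite ((B_e _).1 (Bw x)) ((B_e _).1 (Bw y)).
Qed.

End Words.

Lemma supernilpotent_2m : supernilpotent op (2 * m).
Proof.
apply: supernilpotent_of_support => f /inM_word [g [w fw]].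
have [C size_C wC] := word_support g w.
by exists C => // x y /wC; rewrite !fw.
Qed.

Lemma supernilpotent_single : single_elt B -> supernilpotent op m.
Proof.
move=> B1; apply: supernilpotent_of_support => f /inM_word [g [w fw]].
have [C size_C wC] := word_support_single g w B1.
by exists C => // x y /wC; rewrite !fw.
Qed.

End PowerRectangularBand.

End Semigroup.

Theorem lemma3p2 (T : Type) (op : T -> T -> T) (assoc : associative op)
  (m : nat) (hm : 0 < m) (hRB : rect_band_set op (spow op m.-1)) :
  (m = 1 -> abelian_alg op) /\
  solvable_alg op (up_log 2 m).+1 /\
  (single_elt (spow op m.-1) -> solvable_alg op (up_log 2 m)) /\
  left_nilpotent op (2 * m) /\ right_nilpotent op (2 * m) /\ supernilpotent op (2 * m) /\
  (single_elt (spow op m.-1) ->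
     left_nilpotent op m /\ right_nilpotent op m /\ supernilpotent op m).
Proof.
have solvable := solvable_up_log assoc hRB.
(* [solvable_alg op 1] unfolds to [abelian_alg op]. *)
split; first by move=> m1; rewrite m1 up_log1 in solvable.
split; first exact: solvable.
split; first exact: solvable_up_log_single.
split; first exact: left_nilpotent_2m.
split; first exact: right_nilpotent_2m.
split; first exact: supernilpotent_2m.
move=> B1; split; first exact: left_nilpotent_single.
by split; [exact: right_nilpotent_single | exact: supernilpotent_single].
Qed.
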